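(* Let $A$ be a $p\times p$ positive-semidefinite matrix. If $K_1(A)/K_2(A)\to0$ as $m\to\infty$, then $K_1(A)/\{\Delta(A)\}^2\to0$ as $m\to\infty$.
   Context: Two populations on $\mathbb{R}^p$ have mean vectors $\mu_1,\mu_2$ and positive-definite covariance matrices $\Sigma_1,\Sigma_2$; sample sizes $n_1,n_2\ge4$. Let $\mu_A=A^{1/2}(\mu_1-\mu_2)$, $\Sigma_{i,A}=A^{1/2}\Sigma_iA^{1/2}$, $\Delta(A)=\|\mu_A\|^2$, $K_1(A)=2\sum_{i=1}^2\mathrm{tr}(\Sigma_{i,A}^2)/\{n_i(n_i-1)\}+4\mathrm{tr}(\Sigma_{1,A}\Sigma_{2,A})/(n_1n_2)$, $K_2(A)=4\sum_{i=1}^2\mu_A^T\Sigma_{i,A}\mu_A/n_i$. All quantities may depend on $p,n_1,n_2$; $m=\min\{p,\min(n_1,n_2)\}$. *)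

From HB Require Import structures.
From mathcomp Require Import all_boot all_order all_algebra.
From mathcomp Require Import all_classical all_reals all_analysis.
Set Implicit Arguments. Unset Strict Implicit. Unset Printing Implicit Defensive.
Import Order.TTheory GRing.Theory Num.Theory.
Local Open Scope ring_scope.

Section Defs.
Variable R : realType.

Definition psd (n : nat) (M : 'M[R]_n) : Prop :=
  M^T = M /\ forall x : 'cV[R]_n, 0 <= (x^T *m M *m x) ord0 ord0.

Definition pd (n : nat) (M : 'M[R]_n) : Prop :=
  M^T = M /\ forall x : 'cV[R]_n, x != 0 -> 0 < (x^T *m M *m x) ord0 ord0.

(* B plays the role of A^{1/2}: the (unique) PSD matrix with B B = A *)
Definition muA (n : nat) (B : 'M[R]_n) (mu1 mu2 : 'cV[R]_n) : 'cV[R]_n :=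
  B *m (mu1 - mu2).

Definition SigA (n : nat) (B S : 'M[R]_n) : 'M[R]_n := B *m S *m B.

Definition Delta (n : nat) (B : 'M[R]_n) (mu1 mu2 : 'cV[R]_n) : R :=
  ((muA B mu1 mu2)^T *m muA B mu1 mu2) ord0 ord0.

Definition K1 (n : nat) (n1 n2 : nat) (B S1 S2 : 'M[R]_n) : R :=
  2 * (\tr (SigA B S1 *m SigA B S1) / (n1%:R * (n1%:R - 1))
       + \tr (SigA B S2 *m SigA B S2) / (n2%:R * (n2%:R - 1)))
  + 4 * \tr (SigA B S1 *m SigA B S2) / (n1%:R * n2%:R).

Definition K2 (n : nat) (n1 n2 : nat) (B S1 S2 : 'M[R]_n) (mu1 mu2 : 'cV[R]_n) : R :=
  4 * (((muA B mu1 mu2)^T *m SigA B S1 *m muA B mu1 mu2) ord0 ord0 / n1%:R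
       + ((muA B mu1 mu2)^T *m SigA B S2 *m muA B mu1 mu2) ord0 ord0 / n2%:R).

End Defs.

From HB Require Import structures.
From mathcomp Require Import all_boot all_order all_algebra.
From mathcomp Require Import all_classical all_reals all_analysis.
From mathcomp Require Import ring lra.
Import Order.TTheory GRing.Theory Num.Theory numFieldNormedType.Exports.
Local Open Scope classical_set_scope.
Local Open Scope ring_scope.

(* Put T := Sigma_{1,A}/n1 + Sigma_{2,A}/n2, so that K2 = 4 mu_A^T T mu_A.
   By Cauchy-Schwarz, (mu_A^T T mu_A)^2 <= Delta^2 tr(T^2), and since
   1/n^2 <= 1/(n(n-1)) we have 2 tr(T^2) <= K1.  Hence K2^2 <= 8 Delta^2 K1,
   i.e. K1/Delta^2 <= 8 (K1/K2)^2, and the right-hand side tends to 0. *)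

Section QuadraticForms.
Context {R : realFieldType}.

Lemma CauchySchwarz_sum {n} (a b : 'I_n -> R) :
  (\sum_i a i * b i) ^+ 2 <= (\sum_i a i ^+ 2) * (\sum_i b i ^+ 2).
Proof.
have lagrange : \sum_i \sum_j (a i * b j - a j * b i) ^+ 2 =
    2 * ((\sum_i a i ^+ 2) * (\sum_i b i ^+ 2) - (\sum_i a i * b i) ^+ 2).
  have expand i j : (a i * b j - a j * b i) ^+ 2 =
      a i ^+ 2 * b j ^+ 2 + a j ^+ 2 * b i ^+ 2 - 2 * (a i * b i * (a j * b j)).
    by ring.
  under eq_bigr do under eq_bigr do rewrite expand.
  under eq_bigr do rewrite sumrB big_split /=.
  rewrite sumrB big_split /= [X in _ + X - _]exchange_big /=.
  have -> : \sum_i \sum_j a i ^+ 2 * b j ^+ 2 =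
      (\sum_i a i ^+ 2) * (\sum_i b i ^+ 2).
    by rewrite mulr_suml; apply: eq_bigr => i _; rewrite mulr_sumr.
  have -> : \sum_i \sum_j 2 * (a i * b i * (a j * b j)) =
      2 * (\sum_i a i * b i) ^+ 2.
    rewrite expr2 mulr_suml mulr_sumr; apply: eq_bigr => i _.
    by rewrite !mulr_sumr; apply: eq_bigr => j _; ring.
  by ring.
have : 0 <= \sum_i \sum_j (a i * b j - a j * b i) ^+ 2.
  by apply: sumr_ge0 => i _; apply: sumr_ge0 => j _; exact: sqr_ge0.
by rewrite lagrange pmulr_rge0 // subr_ge0.
Qed.

Lemma quad_formE {n} (M : 'M[R]_n) (x : 'cV[R]_n) :
  (x^T *m M *m x) ord0 ord0 = \sum_i x i ord0 * \sum_j M i j * x j ord0.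
Proof. by rewrite -mulmxA mxE; apply: eq_bigr => i _; rewrite !mxE. Qed.

Lemma quad_formDZ {n} (a b : R) (M N : 'M[R]_n) (x : 'cV[R]_n) :
  (x^T *m (a *: M + b *: N) *m x) ord0 ord0 =
  a * (x^T *m M *m x) ord0 ord0 + b * (x^T *m N *m x) ord0 ord0.
Proof. by rewrite mulmxDr mulmxDl -!scalemxAr -!scalemxAl !mxE. Qed.

Lemma dotmxE {n} (x : 'cV[R]_n) : (x^T *m x) ord0 ord0 = \sum_i x i ord0 ^+ 2.
Proof. by rewrite mxE; apply: eq_bigr => i _; rewrite mxE expr2. Qed.

Lemma mxtrace_sqr_sym {n} (M : 'M[R]_n) : M^T = M ->
  \tr (M *m M) = \sum_i \sum_j M i j ^+ 2.
Proof.
move=> symM; apply: eq_bigr => i _; rewrite mxE; apply: eq_bigr => j _.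
by rewrite -{2}symM mxE expr2.
Qed.

Lemma mxtrace_sqr_sym_ge0 {n} (M : 'M[R]_n) : M^T = M -> 0 <= \tr (M *m M).
Proof.
move=> /mxtrace_sqr_sym ->.
by apply: sumr_ge0 => i _; apply: sumr_ge0 => j _; exact: sqr_ge0.
Qed.

(* the operator norm of M is bounded by its Frobenius norm *)
Lemma quad_form_sqr_le {n} (M : 'M[R]_n) (x : 'cV[R]_n) : M^T = M ->
  ((x^T *m M *m x) ord0 ord0) ^+ 2 <= ((x^T *m x) ord0 ord0) ^+ 2 * \tr (M *m M).
Proof.
move=> symM; rewrite quad_formE dotmxE mxtrace_sqr_sym //.
set X := \sum_i x i ord0 ^+ 2.
have X_ge0 : 0 <= X by apply: sumr_ge0 => i _; exact: sqr_ge0.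
apply: le_trans (CauchySchwarz_sum (fun i => x i ord0)
  (fun i => \sum_j M i j * x j ord0)) _.
rewrite -/X expr2 -mulrA ler_wpM2l // mulrC mulr_suml.
by apply: ler_sum => i _; exact: CauchySchwarz_sum.
Qed.

Lemma ratio_sqr_le (K1 K2 D : R) : 0 <= K1 -> K2 ^+ 2 <= 8 * D ^+ 2 * K1 ->
  (D != 0 -> K2 != 0) -> 0 <= K1 / D ^+ 2 <= 8 * (K1 / K2) ^+ 2.
Proof.
move=> K1_ge0 K2_le D_K2.
have [->|D_neq0] := eqVneq D 0.
  by rewrite expr0n /= invr0 mulr0 lexx mulr_ge0 // sqr_ge0.
have D2_gt0 : 0 < D ^+ 2 by rewrite exprn_even_gt0.
have K22_gt0 : 0 < K2 ^+ 2 by rewrite exprn_even_gt0 //= D_K2.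
rewrite divr_ge0 ?sqr_ge0 //= ler_pdivrMr //.
have -> : 8 * (K1 / K2) ^+ 2 * D ^+ 2 = 8 * K1 ^+ 2 * D ^+ 2 / K2 ^+ 2.
  by rewrite expr_div_n; ring.
by rewrite ler_pdivlMr //; nra.
Qed.

Lemma inv_sqr_le_inv_falling2 {m} : (1 < m)%N ->
  m%:R^-1 * m%:R^-1 <= (m%:R * (m%:R - 1))^-1 :> R.
Proof.
move=> m_gt1; have m2 : 2 <= m%:R :> R by rewrite ler_nat.
by rewrite -invfM lef_pV2 ?posrE; nra.
Qed.

End QuadraticForms.

Section TwoSampleBound.
Variables (R : realType) (n : nat) (n1 n2 : nat) (B S1 S2 : 'M[R]_n).
Variables (mu1 mu2 : 'cV[R]_n).
Hypotheses (n1_gt1 : (1 < n1)%N) (n2_gt1 : (1 < n2)%N) (symB : B^T = B).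
Hypotheses (pdS1 : pd S1) (pdS2 : pd S2).

Let T : 'M[R]_n := n1%:R^-1 *: SigA B S1 + n2%:R^-1 *: SigA B S2.
Let mu := muA B mu1 mu2.

Lemma SigA_sym {S : 'M[R]_n} : S^T = S -> (SigA B S)^T = SigA B S.
Proof. by move=> symS; rewrite /SigA !trmx_mul symB symS mulmxA. Qed.

Let symT : T^T = T.
Proof. by rewrite linearD /= !linearZ /= !SigA_sym // (pdS1.1, pdS2.1). Qed.

Lemma mxtrace_weighted_sqr_le_K1 : 2 * \tr (T *m T) <= K1 n1 n2 B S1 S2.
Proof.
set S1' := SigA B S1; set S2' := SigA B S2.
have trTT : \tr (T *m T) = n1%:R^-1 * n1%:R^-1 * \tr (S1' *m S1')
    + 2 * (n1%:R^-1 * n2%:R^-1) * \tr (S1' *m S2')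
    + n2%:R^-1 * n2%:R^-1 * \tr (S2' *m S2').
  rewrite mulmxDl !mulmxDr -!scalemxAl -!scalemxAr !scalerA !mxtraceD !mxtraceZ.
  by rewrite (mxtrace_mulC S2' S1'); ring.
have t1 := mxtrace_sqr_sym_ge0 _ (SigA_sym pdS1.1).
have t2 := mxtrace_sqr_sym_ge0 _ (SigA_sym pdS2.1).
have c1 : _ <= _ :> R := inv_sqr_le_inv_falling2 n1_gt1.
have c2 : _ <= _ :> R := inv_sqr_le_inv_falling2 n2_gt1.
rewrite trTT /K1 -/S1' -/S2' invfM; nra.
Qed.

Lemma K2_quad_form : K2 n1 n2 B S1 S2 mu1 mu2 = 4 * (mu^T *m T *m mu) ord0 ord0.
Proof. by rewrite /K2 quad_formDZ -/mu !(mulrC n1%:R^-1) !(mulrC n2%:R^-1). Qed.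

Lemma K2_neq0 : Delta B mu1 mu2 != 0 -> K2 n1 n2 B S1 S2 mu1 mu2 != 0.
Proof.
move=> Delta_neq0; set w := B *m mu.
have SigA_form S : (mu^T *m SigA B S *m mu) ord0 ord0 = (w^T *m S *m w) ord0 ord0.
  by rewrite /SigA /w (trmx_mul B mu) symB !mulmxA.
have w_neq0 : w != 0.
  apply: contraNneq Delta_neq0 => w0.
  have -> : Delta B mu1 mu2 = ((mu1 - mu2)^T *m w) ord0 ord0.
    by rewrite /Delta -/mu /w {1}/mu /muA trmx_mul symB mulmxA.
  by rewrite w0 mulmx0 mxE.
have n1_gt0 : (0 < n1)%N by apply: ltnW.
have n2_gt0 : (0 < n2)%N by apply: ltnW.
rewrite /K2 -/mu !SigA_form gt_eqF // mulr_gt0 // addr_gt0 // divr_gt0 ?ltr0n //.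
  exact: pdS1.2.
exact: pdS2.2.
Qed.

Lemma K1_Delta_le_K1_K2 :
  0 <= K1 n1 n2 B S1 S2 / (Delta B mu1 mu2) ^+ 2 <=
  8 * (K1 n1 n2 B S1 S2 / K2 n1 n2 B S1 S2 mu1 mu2) ^+ 2.
Proof.
have trT_le := mxtrace_weighted_sqr_le_K1.
have trT_ge0 := mxtrace_sqr_sym_ge0 T symT.
have q_le := quad_form_sqr_le T mu symT.
apply: ratio_sqr_le K2_neq0; first by nra.
by rewrite K2_quad_form /Delta -/mu; nra.
Qed.

End TwoSampleBound.

Theorem proposition1 (R : realType) (p n1 n2 : nat -> nat)
  (mu1 mu2 : forall k, 'cV[R]_(p k)) (S1 S2 A B : forall k, 'M[R]_(p k)) :
  (forall k, (4 <= n1 k)%N) -> (forall k, (4 <= n2 k)%N) ->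
  (forall k, pd (S1 k)) -> (forall k, pd (S2 k)) ->
  (forall k, psd (A k)) ->
  (forall k, psd (B k) /\ B k *m B k = A k) ->
  (forall M : nat, \forall k \near \oo, (M <= minn (p k) (minn (n1 k) (n2 k)))%N) ->
  (fun k => K1 (n1 k) (n2 k) (B k) (S1 k) (S2 k)
            / K2 (n1 k) (n2 k) (B k) (S1 k) (S2 k) (mu1 k) (mu2 k)) @ \oo --> 0 ->
  (fun k => K1 (n1 k) (n2 k) (B k) (S1 k) (S2 k)
            / (Delta (B k) (mu1 k) (mu2 k)) ^+ 2) @ \oo --> 0.
Proof.
move=> n1_ge4 n2_ge4 pdS1 pdS2 _ sqrtB _ K1_K2_to0.
set r := (fun k => _ / K2 _ _ _ _ _ _ _) in K1_K2_to0.
apply: (@squeeze_cvgr _ _ _ _ (fun=> 0) ((fun=> 8) \* (r \* r))).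
- apply: nearW => k.
  have gt1 m : (4 <= m)%N -> (1 < m)%N by apply: ltn_trans.
  exact: K1_Delta_le_K1_K2 (gt1 _ (n1_ge4 k)) (gt1 _ (n2_ge4 k)) (sqrtB k).1.1
    (pdS1 k) (pdS2 k).
- exact: cvg_cst.
- rewrite -(mulr0 8) -[X in 8 * X](mulr0 0).
  exact: cvgM (cvg_cst _) (cvgM K1_K2_to0 K1_K2_to0).
Qed.
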